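(* Let $N$ be an odd positive integer and $r\ge s\ge2$. The map $\Gamma_1(N2^r)^{\mathrm{ab}}\to(\Phi_r^s)^{\mathrm{ab}}$ induced by inclusion commutes with the Atkin operators $U$, and its cokernel is identified with $\Gamma_s/\Gamma_r$ via $\begin{pmatrix}a&b\\c&d\end{pmatrix}\mapsto d\bmod\Gamma_r$. The endomorphism of $\Gamma_s/\Gamma_r$ induced by $U$ is multiplication by $2$ (in additive notation for the abelian group $\Gamma_s/\Gamma_r$, i.e. $x\mapsto x^2$ multiplicatively).
   Context: For $M\ge1$, $\Gamma_1(M)=\{\begin{pmatrix}a&b\\c&d\end{pmatrix}\in\mathrm{SL}_2(\mathbb{Z}) : c\equiv0,\ a\equiv d\equiv1 \pmod M\}$, $\Gamma_0(M)=\{c\equiv 0\pmod M\}$, $\Gamma^0(2)=\{b\equiv0\pmod 2\}$ (all inside $\mathrm{SL}_2(\mathbb{Z})$). For $r\ge s\ge2$, $\Phi_r^s:=\Gamma_1(N2^s)\cap\Gamma_0(2^r)$, so $\Phi_r^r=\Gamma_1(N2^r)$; $G^{\mathrm{ab}}$ denotes abelianization. $\Gamma_r:=1+2^r\mathbb{Z}_2\subset\mathbb{Z}_2^\times$. Let $t=\begin{pmatrix}1&0\\0&2\end{pmatrix}$; $x\mapsto txt^{-1}$ is an isomorphism $\Phi_r^s\cap\Gamma^0(2)\to\Phi_{r+1}^s$. The Atkin operator $U$ on $(\Phi_r^s)^{\mathrm{ab}}$ is the composite of the transfer $(\Phi_r^s)^{\mathrm{ab}}\to(\Phi_r^s\cap\Gamma^0(2))^{\mathrm{ab}}$,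 the map induced by $x\mapsto txt^{-1}$ to $(\Phi_{r+1}^s)^{\mathrm{ab}}$, and the inclusion-induced map $(\Phi_{r+1}^s)^{\mathrm{ab}}\to(\Phi_r^s)^{\mathrm{ab}}$. *)

From mathcomp Require Import all_boot all_order all_algebra.
Set Implicit Arguments. Unset Strict Implicit. Unset Printing Implicit Defensive.
Import Order.TTheory GRing.Theory Num.Theory.
Local Open Scope ring_scope.

Definition Mat := 'M[int]_2.

Definition i0 : 'I_2 := @ord0 1.
Definition i1 : 'I_2 := @ord_max 1.
Definition ea (g : Mat) : int := g i0 i0.
Definition eb (g : Mat) : int := g i0 i1.
Definition ec (g : Mat) : int := g i1 i0.
Definition ed (g : Mat) : int := g i1 i1.

Definition SL2 (g : Mat) : bool := \det g == 1.
Definition Gamma1 (M : nat) (g : Mat) : bool :=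
  [&& SL2 g, (M%:Z %| ec g)%Z, (M%:Z %| ea g - 1)%Z & (M%:Z %| ed g - 1)%Z].
Definition Gamma0 (M : nat) (g : Mat) : bool := SL2 g && (M%:Z %| ec g)%Z.
Definition Gamma0up2 (g : Mat) : bool := SL2 g && (2 %| eb g)%Z.
Definition Phi (N r s : nat) (g : Mat) : bool :=
  Gamma1 (N * 2 ^ s) g && Gamma0 (2 ^ r) g.

Inductive comm_sub (G : pred Mat) : Mat -> Prop :=
| comm_sub1 : comm_sub G 1
| comm_subM (x y z : Mat) : G x -> G y -> comm_sub G z ->
    comm_sub G (x^-1 * y^-1 * x * y * z).

(* x and y (elements of G) have the same image in G^ab *)
Definition ab_eq (G : pred Mat) (x y : Mat) : Prop := comm_sub G (x * y^-1).

Definition sub0up2 (G : pred Mat) : pred Mat := fun x => G x && Gamma0up2 x.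

Definition right_transv (G H : pred Mat) (ts : seq Mat) : Prop :=
  all G ts /\ forall g, G g -> count (fun t => H (g * t^-1)) ts = 1%N.

(* Transfer G -> H^ab computed with the right transversal ts:
   product over t_i in ts of t_i g t_{sigma i}^-1, where t_{sigma i} is the
   representative of the coset H t_i g.  (Result well defined modulo [H,H].) *)
Definition transfer (H : pred Mat) (ts : seq Mat) (g : Mat) : Mat :=
  \prod_(t <- ts)
     (t * g * (nth 1 ts (find (fun u => H (t * g * u^-1)) ts))^-1).

(* x |-> t x t^-1 with t = diag(1,2), for x with even upper-right entry:
   (a b; c d) |-> (a b/2; 2c d). *)
Definition conj_t (x : Mat) : Mat :=
  \matrix_(i < 2, j < 2)
    (if i == i0 then (if j == i0 then ea x else (eb x %/ 2)%Z)
     else (if j == i0 then 2 * ec x else ed x)).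

(* The Atkin operator U on G^ab (G = Phi_r^s), computed with a right
   transversal ts of G cap Gamma^0(2) in G; followed by the inclusion
   Phi_{r+1}^s -> Phi_r^s, which is the identity on matrices. *)
Definition AtkinU (G : pred Mat) (ts : seq Mat) (g : Mat) : Mat :=
  conj_t (transfer (sub0up2 G) ts g).

(* Both [Γ_1(N 2^r) ∩ Γ^0(2)] and [Phi_r^s ∩ Γ^0(2)] have index two, the cosets
   being told apart by the parity of the upper-right entry.  For a transversal
   [{u, v}] the transfer of [g] is [(u g u^-1)(v g v^-1)] if [g] is in the
   subgroup and [u g^2 u^-1] otherwise; modulo commutators of [Phi_r^s ∩ Γ^0(2)]
   this is [g (Tm g Tm^-1)], resp. [g^2], whatever the group and the transversal,
   whence (i) after conjugating by [diag(1, 2)].  On [Γ_0(2^r)] the lower-right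
   entry modulo [2^r] is a homomorphism killing commutators; it maps both values
   above to [d^2], which gives (v).  Its kernel on [Phi_r^s] is [Γ_1(N 2^r)]
   because [a d = 1 mod 2^r] and [N] is odd, and it is onto [Γ_s / Γ_r]. *)

From mathcomp Require Import all_boot all_order all_algebra zify ring.
Import Order.TTheory GRing.Theory Num.Theory.
Local Open Scope ring_scope.
Set Implicit Arguments. Unset Strict Implicit. Unset Printing Implicit Defensive.

Lemma lift_I2 (i : 'I_2) (j : 'I_1) : lift i j = if val i == 0%N then i1 else i0.
Proof. by apply/val_inj; case: i => [[|[|]]] //= _; case: j => [[|]]. Qed.

Lemma det_Mat (x : Mat) : \det x = ea x * ed x - eb x * ec x.
Proof.
rewrite (expand_det_row _ i0) big_ord_recl big_ord1 /cofactor !det_mx11 /=.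
by rewrite !mxE /= !lift_I2 /= /ea /ed /eb /ec /= expr0 expr1; ring.
Qed.

Lemma entries_mul (x y : Mat) :
  [/\ ea (x * y) = ea x * ea y + eb x * ec y,
      eb (x * y) = ea x * eb y + eb x * ed y,
      ec (x * y) = ec x * ea y + ed x * ec y &
      ed (x * y) = ec x * eb y + ed x * ed y].
Proof.
by rewrite /ea /eb /ec /ed -mulmxE !mxE !big_ord_recl !big_ord0 !addr0 /= !lift_I2.
Qed.

Definition mx2 (a b c d : int) : Mat :=
  \matrix_(i < 2, j < 2)
    (if i == i0 then (if j == i0 then a else b) else (if j == i0 then c else d)).

Lemma mx2E a b c d :
  [/\ ea (mx2 a b c d) = a, eb (mx2 a b c d) = b, ec (mx2 a b c d) = c &
      ed (mx2 a b c d) = d].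
Proof. by rewrite /ea /eb /ec /ed !mxE. Qed.

Lemma Mat_ext (x y : Mat) :
  ea x = ea y -> eb x = eb y -> ec x = ec y -> ed x = ed y -> x = y.
Proof.
have I2P (i : 'I_2) : i = i0 \/ i = i1.
  by case: i => [[|[|//]]] ?; [left|right]; apply/val_inj.
move=> ha hb hc hd; apply/matrixP => i j.
by case: (I2P i) => ->; case: (I2P j) => ->.
Qed.

Lemma entries_1 : [/\ ea 1 = 1, eb 1 = 0, ec 1 = 0 & ed 1 = 1].
Proof. by rewrite /ea /eb /ec /ed !mxE. Qed.

Lemma SL2P x : reflect (ea x * ed x - eb x * ec x = 1) (SL2 x).
Proof. by rewrite /SL2 det_Mat; apply: eqP. Qed.

Lemma SL2_unit x : SL2 x -> x \is a GRing.unit.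
Proof. by move=> /eqP h; rewrite unitmxE h unitr1. Qed.

Lemma SL2_1 : SL2 1.
Proof. by rewrite /SL2 det1. Qed.

Lemma SL2M x y : SL2 x -> SL2 y -> SL2 (x * y).
Proof. by rewrite /SL2 -mulmxE det_mulmx => /eqP -> /eqP ->; rewrite mulr1. Qed.

Definition adj2 (x : Mat) : Mat := mx2 (ed x) (- eb x) (- ec x) (ea x).

Lemma SL2_inv x : SL2 x -> x^-1 = adj2 x.
Proof.
move=> Sx; apply: (mulrI (SL2_unit Sx)); rewrite mulrV ?SL2_unit //.
have det1 := SL2P _ Sx; case: entries_1 => o1 o2 o3 o4.
case: (entries_mul x (adj2 x)) => m1 m2 m3 m4.
case: (mx2E (ed x) (- eb x) (- ec x) (ea x)) => k1 k2 k3 k4.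
apply: Mat_ext; rewrite ?m1 ?m2 ?m3 ?m4 /adj2 ?k1 ?k2 ?k3 ?k4 ?o1 ?o2 ?o3 ?o4;
  by rewrite -?det1; ring.
Qed.

Lemma entries_inv x : SL2 x ->
  [/\ ea x^-1 = ed x, eb x^-1 = - eb x, ec x^-1 = - ec x & ed x^-1 = ea x].
Proof. by move/SL2_inv ->; apply: mx2E. Qed.

Lemma SL2V x : SL2 x -> SL2 x^-1.
Proof.
move=> Sx; apply/SL2P; case: (entries_inv Sx) => -> -> -> ->.
by rewrite -(SL2P _ Sx); ring.
Qed.

Record SLgroup (G : pred Mat) : Prop := {
  SLgroup1 : G 1;
  SLgroupM : forall x y, G x -> G y -> G (x * y);
  SLgroupV : forall x, G x -> G x^-1;
  SLgroup_SL2 : forall x, G x -> SL2 x }.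

Lemma SLgroup_unit G x : SLgroup G -> G x -> x \is a GRing.unit.
Proof. by move=> sgG /(SLgroup_SL2 sgG) /SL2_unit. Qed.

Lemma SLgroupI G H : SLgroup G -> SLgroup H -> SLgroup (fun x => G x && H x).
Proof.
move=> sgG sgH; split=> [|x y /andP[Gx Hx] /andP[Gy Hy]|x /andP[Gx Hx]|x /andP[Gx _]].
- by rewrite !SLgroup1.
- by rewrite !SLgroupM.
- by rewrite !SLgroupV.
- exact: (SLgroup_SL2 sgG Gx).
Qed.

Lemma Gamma1_SLgroup M : SLgroup (Gamma1 M).
Proof.
split=> [|x y|x|x /and4P[] //].
- by case: entries_1 => a _ c d; rewrite /Gamma1 SL2_1 a c d subrr dvdz0.
- case/and4P=> Sx cx ax dx /and4P[Sy cy ay dy].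
  rewrite /Gamma1 SL2M //=; case: (entries_mul x y) => -> _ -> ->.
  have -> : ea x * ea y + eb x * ec y - 1 =
    (ea x - 1) * ea y + (ea y - 1) + eb x * ec y by ring.
  have -> : ec x * eb y + ed x * ed y - 1 =
    (ed x - 1) * ed y + (ed y - 1) + ec x * eb y by ring.
  rewrite (rpredD (dvdz_mulr _ cx) (dvdz_mull _ cy)).
  rewrite (rpredD (rpredD (dvdz_mulr _ ax) ay) (dvdz_mull _ cy)).
  by rewrite (rpredD (rpredD (dvdz_mulr _ dx) dy) (dvdz_mulr _ cx)).
- case/and4P=> Sx cx ax dx; rewrite /Gamma1 SL2V //.
  by case: (entries_inv Sx) => -> _ -> ->; rewrite rpredN cx ax dx.
Qed.

Lemma Gamma0_SLgroup M : SLgroup (Gamma0 M).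
Proof.
split=> [|x y|x|x /andP[] //].
- by case: entries_1 => _ _ c _; rewrite /Gamma0 SL2_1 c dvdz0.
- case/andP=> Sx cx /andP[Sy cy]; rewrite /Gamma0 SL2M //=.
  case: (entries_mul x y) => _ _ -> _.
  by rewrite (rpredD (dvdz_mulr _ cx) (dvdz_mull _ cy)).
- case/andP=> Sx cx; rewrite /Gamma0 SL2V //.
  by case: (entries_inv Sx) => _ _ -> _; rewrite rpredN.
Qed.

Lemma Gamma0up2_SLgroup : SLgroup Gamma0up2.
Proof.
split=> [|x y|x|x /andP[] //].
- by case: entries_1 => _ b _ _; rewrite /Gamma0up2 SL2_1 b dvdz0.
- case/andP=> Sx bx /andP[Sy by']; rewrite /Gamma0up2 SL2M //=.
  case: (entries_mul x y) => _ -> _ _.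
  by rewrite (rpredD (dvdz_mull _ by') (dvdz_mulr _ bx)).
- case/andP=> Sx bx; rewrite /Gamma0up2 SL2V //.
  by case: (entries_inv Sx) => _ -> _ _; rewrite rpredN.
Qed.

Lemma sub0up2_SLgroup G : SLgroup G -> SLgroup (sub0up2 G).
Proof. by move=> sgG; apply: SLgroupI sgG Gamma0up2_SLgroup. Qed.

Lemma ab_eq_subset (K H : pred Mat) x y :
  (forall z, K z -> H z) -> ab_eq K x y -> ab_eq H x y.
Proof.
move=> KH; rewrite /ab_eq; elim=> [|a b z Ka Kb _ IH]; first exact: comm_sub1.
by apply: comm_subM; rewrite ?KH.
Qed.

Section Abelianization.
Variable K : pred Mat.
Hypothesis sgK : SLgroup K.

Let Ku x : K x -> x \is a GRing.unit. Proof. exact: SLgroup_unit. Qed.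
Let KM := SLgroupM sgK.
Let KV := SLgroupV sgK.

Lemma comm_sub_mem z : comm_sub K z -> K z.
Proof. by elim=> [|x y w Kx Ky _ Kw]; rewrite ?SLgroup1 // !KM ?KV. Qed.

Lemma comm_sub_commutator x y : K x -> K y -> comm_sub K (x^-1 * y^-1 * x * y).
Proof. by move=> Kx Ky; have := comm_subM Kx Ky (comm_sub1 K); rewrite mulr1. Qed.

Lemma comm_sub_mul x y : comm_sub K x -> comm_sub K y -> comm_sub K (x * y).
Proof.
elim=> [|a b z Ka Kb _ IH] Cy; first by rewrite mul1r.
by rewrite -[_ * z * y]mulrA; apply: comm_subM Ka Kb (IH Cy).
Qed.

Lemma comm_subV z : comm_sub K z -> comm_sub K z^-1.
Proof.
elim=> [|x y w Kx Ky Cw IH]; first by rewrite invr1; constructor.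
have Kw := comm_sub_mem Cw.
have -> : (x^-1 * y^-1 * x * y * w)^-1 = w^-1 * (y^-1 * x^-1 * y * x).
  rewrite !invrM ?unitrV ?unitrMr ?Ku ?KM ?KV // !invrK.
  by rewrite !mulrA.
by apply: comm_sub_mul => //; apply: comm_sub_commutator.
Qed.

Lemma comm_sub_conj h z : K h -> comm_sub K z -> comm_sub K (h * z * h^-1).
Proof.
move=> Kh Cz; have Kz := comm_sub_mem Cz.
have -> : h * z * h^-1 = (h^-1)^-1 * (z^-1)^-1 * h^-1 * z^-1 * z.
  by rewrite !invrK (mulrVK (Ku Kz)).
by constructor; rewrite ?KV.
Qed.

Lemma ab_eq_mem x y : K y -> ab_eq K x y -> K x.
Proof. by move=> Ky /comm_sub_mem Kxy; rewrite -(mulrVK (Ku Ky) x) KM. Qed.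

Lemma ab_eq_refl x : K x -> ab_eq K x x.
Proof. by move=> Kx; rewrite /ab_eq mulrV ?Ku //; constructor. Qed.

Lemma ab_eq_sym x y : K y -> ab_eq K x y -> ab_eq K y x.
Proof.
move=> Ky Exy; have Kx := ab_eq_mem Ky Exy.
by move: (comm_subV Exy); rewrite /ab_eq invrM ?unitrV ?Ku // invrK.
Qed.

Lemma ab_eq_trans x y z : K y -> ab_eq K x y -> ab_eq K y z -> ab_eq K x z.
Proof.
by move=> Ky Exy Eyz; have := comm_sub_mul Exy Eyz; rewrite !mulrA (mulrVK (Ku Ky)).
Qed.

Lemma ab_eq_conj h y : K h -> K y -> ab_eq K (h * y * h^-1) y.
Proof.
move=> Kh Ky; have := comm_sub_commutator (KV Kh) (KV Ky).
by rewrite !invrK.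
Qed.

Lemma ab_eq_mulC x y : K x -> K y -> ab_eq K (x * y) (y * x).
Proof.
move=> Kx Ky; have := comm_sub_commutator (KV Kx) (KV Ky).
by rewrite /ab_eq invrM ?Ku // !invrK !mulrA.
Qed.

Lemma ab_eq_mul x x' y y' : K x' -> K y' -> ab_eq K x x' -> ab_eq K y y' ->
  ab_eq K (x * y) (x' * y').
Proof.
move=> Kx' Ky' Exx Eyy; have Kx := ab_eq_mem Kx' Exx; rewrite /ab_eq.
have -> : x * y * (x' * y')^-1 = x * (y * y'^-1) * x^-1 * (x * x'^-1).
  by rewrite invrM ?Ku // !mulrA (mulrVK (Ku Kx)).
exact/comm_sub_mul/Exx/comm_sub_conj.
Qed.

End Abelianization.

Definition b_even (x : Mat) : bool := (2 %| eb x)%Z.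

Definition Tm : Mat := mx2 1 1 0 1.

Lemma SL2_Tm : SL2 Tm.
Proof. by apply/SL2P; case: (mx2E 1 1 0 1) => -> -> -> ->. Qed.

Lemma b_even_Tm : ~~ b_even Tm.
Proof. by rewrite /b_even /Tm; case: (mx2E 1 1 0 1) => _ -> _ _. Qed.

Lemma b_evenV x : SL2 x -> b_even x^-1 = b_even x.
Proof.
by move=> Sx; rewrite /b_even; case: (entries_inv Sx) => _ -> _ _; rewrite rpredN.
Qed.

Lemma Gamma1_Tm M : Gamma1 M Tm.
Proof.
by rewrite /Gamma1 SL2_Tm /Tm; case: (mx2E 1 1 0 1) => -> _ -> ->; rewrite subrr dvdz0.
Qed.

Lemma Gamma0_Tm M : Gamma0 M Tm.
Proof. by rewrite /Gamma0 SL2_Tm /Tm; case: (mx2E 1 1 0 1) => _ _ -> _; apply: dvdz0. Qed.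

(* The transfer [G -> (G ∩ Γ^0(2))^ab] computed with the transversal [[:: 1; Tm]]. *)
Definition transfer_index2 (g : Mat) : Mat :=
  if b_even g then g * (Tm * g * Tm^-1) else g * g.

Section IndexTwo.
Variable G : pred Mat.
Hypotheses (sgG : SLgroup G) (G_Tm : G Tm)
  (G_odd_diag : forall x, G x -> (2 %| ea x - 1)%Z /\ (2 %| ed x - 1)%Z).
Local Notation K := (sub0up2 G).

Let sgK : SLgroup K := sub0up2_SLgroup sgG.
Let GM := SLgroupM sgG.
Let GV := SLgroupV sgG.
Let Gunit x (Gx : G x) := SLgroup_unit sgG Gx.

Lemma sub0up2E x : K x = G x && b_even x.
Proof.
by rewrite /sub0up2 /Gamma0up2; case Gx: (G x); rewrite //= (SLgroup_SL2 sgG Gx).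
Qed.

Lemma b_even_mul x y : G x -> G y -> b_even (x * y) = (b_even x == b_even y).
Proof.
move=> Gx Gy; rewrite /b_even; case: (entries_mul x y) => _ -> _ _.
have [/dvdzP[p hp] _] := G_odd_diag Gx; have [_ /dvdzP[q hq]] := G_odd_diag Gy.
have -> : ea x = p * 2 + 1 by rewrite -hp; ring.
have -> : ed y = q * 2 + 1 by rewrite -hq; ring.
have -> : (p * 2 + 1) * eb y + eb x * (q * 2 + 1) =
  2 * (p * eb y + eb x * q) + eb y + eb x by ring.
move: (p * eb y + eb x * q) => w; lia.
Qed.

Lemma sub0up2_div x y : G x -> G y -> K (x * y^-1) = (b_even x == b_even y).
Proof.
move=> Gx Gy; rewrite sub0up2E GM ?GV //= b_even_mul ?GV //.
by rewrite b_evenV ?(SLgroup_SL2 sgG Gy).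
Qed.

Lemma sub0up2_conj t y : G t -> K y -> K (t * y * t^-1).
Proof.
move=> Gt; rewrite !sub0up2E => /andP[Gy ey].
rewrite !GM ?GV //= !b_even_mul ?GM ?GV // b_evenV ?(SLgroup_SL2 sgG Gt) // ey.
by case: (b_even t).
Qed.

Lemma right_transv_pair ts : right_transv G K ts ->
  exists u v, [/\ ts = [:: u; v], G u, G v & b_even u = ~~ b_even v].
Proof.
case=> /allP Gts count1.
have c1 := count1 1 (SLgroup1 sgG); have cT := count1 Tm G_Tm.
rewrite (@eq_in_count _ _ b_even) in c1; last first.
  by move=> t /Gts Gt; rewrite mul1r sub0up2E GV //= b_evenV ?(SLgroup_SL2 sgG Gt).
rewrite (@eq_in_count _ _ (predC b_even)) in cT; last first.
  by move=> t /Gts Gt; rewrite sub0up2_div //= (negbTE b_even_Tm); case: (b_even t).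
have := count_predC b_even ts; rewrite c1 cT.
case: ts Gts c1 {count1 cT} => [|u [|v [|]]] //= Gts c1 _.
exists u, v; split => //; try (apply: Gts; rewrite !inE eqxx ?orbT //).
by move: c1; case: (b_even u); case: (b_even v).
Qed.

Lemma transfer_pair ts g : right_transv G K ts -> G g ->
  exists u v, [/\ G u, G v, b_even u = ~~ b_even v &
    transfer K ts g =
      if b_even g then (u * g * u^-1) * (v * g * v^-1) else u * (g * g) * u^-1].
Proof.
move=> /right_transv_pair [u [v [-> Gu Gv euv]]] Gg.
have Kcoset t w : G t -> G w ->
    K (t * g * w^-1) = ((b_even t == b_even g) == b_even w).
  by move=> Gt Gw; rewrite sub0up2_div ?GM // b_even_mul.
exists u, v; split => //.
rewrite /transfer big_cons big_cons big_nil mulr1 /= !Kcoset // euv.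
by case: (b_even g); case: (b_even v) => //=; rewrite !mulrA mulrVK ?Gunit // -!mulrA.
Qed.

Lemma ab_eq_conj_coset t y : G t -> K y ->
  ab_eq K (t * y * t^-1) (if b_even t then y else Tm * y * Tm^-1).
Proof.
move=> Gt Ky; case: ifP => et.
  by apply: (ab_eq_conj sgK) => //; rewrite sub0up2E Gt.
have Kh : K (t * Tm^-1) by rewrite sub0up2_div // et (negbTE b_even_Tm).
have -> : t * y * t^-1 = (t * Tm^-1) * (Tm * y * Tm^-1) * (t * Tm^-1)^-1.
  by rewrite invrM ?unitrV ?Gunit // invrK !mulrA !(mulrVK (Gunit G_Tm)).
by apply: (ab_eq_conj sgK) => //; apply: sub0up2_conj.
Qed.

Lemma transfer_index2_mem g : G g -> K (transfer_index2 g).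
Proof.
move=> Gg; rewrite /transfer_index2; case: ifP => eg.
  have Kg : K g by rewrite sub0up2E Gg eg.
  by apply: (SLgroupM sgK) => //; apply: sub0up2_conj.
by rewrite sub0up2E GM // b_even_mul // eqxx.
Qed.

Lemma transfer_ab_eq ts g : right_transv G K ts -> G g ->
  ab_eq K (transfer K ts g) (transfer_index2 g).
Proof.
move=> hts Gg; have [u [v [Gu Gv euv ->]]] := transfer_pair hts Gg.
rewrite /transfer_index2; case: ifP => eg.
- have Kg : K g by rewrite sub0up2E Gg eg.
  have KTg := sub0up2_conj G_Tm Kg.
  have Eu := ab_eq_conj_coset Gu Kg; have Ev := ab_eq_conj_coset Gv Kg.
  case: (b_even v) euv Eu Ev => -> /= Eu Ev.
    exact: (ab_eq_trans sgK (SLgroupM sgK KTg Kg)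
      (ab_eq_mul sgK KTg Kg Eu Ev) (ab_eq_mulC sgK KTg Kg)).
  exact: (ab_eq_mul sgK Kg KTg Eu Ev).
- have Kgg : K (g * g) by rewrite sub0up2E GM // b_even_mul // eqxx.
  case eu: (b_even u).
    by apply: (ab_eq_conj sgK) => //; rewrite sub0up2E Gu eu.
  have Kh : K (u * g^-1) by rewrite sub0up2_div // eu eg.
  have -> : u * (g * g) * u^-1 = (u * g^-1) * (g * g) * (u * g^-1)^-1.
    by rewrite invrM ?unitrV ?Gunit // invrK !mulrA (mulrVK (Gunit Gg)).
  exact: (ab_eq_conj sgK).
Qed.

End IndexTwo.

Lemma entries_conj_t x :
  [/\ ea (conj_t x) = ea x, eb (conj_t x) = (eb x %/ 2)%Z,
      ec (conj_t x) = 2 * ec x & ed (conj_t x) = ed x].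
Proof. exact: (mx2E (ea x) (eb x %/ 2)%Z (2 * ec x) (ed x)). Qed.

Lemma conj_t1 : conj_t 1 = 1.
Proof.
case: (entries_conj_t 1) entries_1 => a b c d [a1 b1 c1 d1].
by apply: Mat_ext; rewrite ?a ?b ?c ?d ?a1 ?b1 ?c1 ?d1 ?mulr0 ?div0z.
Qed.

Lemma conj_tM x y : b_even x -> b_even y -> conj_t (x * y) = conj_t x * conj_t y.
Proof.
move=> /dvdzP[kx hx] /dvdzP[ky hy].
case: (entries_mul x y) => h1 h2 h3 h4.
case: (entries_mul (conj_t x) (conj_t y)) => k1 k2 k3 k4.
case: (entries_conj_t x) => a1 a2 a3 a4; case: (entries_conj_t y) => b1 b2 b3 b4.
case: (entries_conj_t (x * y)) => c1 c2 c3 c4.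
apply: Mat_ext; rewrite ?c1 ?c2 ?c3 ?c4 ?k1 ?k2 ?k3 ?k4 ?a1 ?a2 ?a3 ?a4 ?b1 ?b2 ?b3 ?b4
  ?h1 ?h2 ?h3 ?h4 ?hx ?hy ?mulzK //; try ring.
have -> : ea x * (ky * 2) + kx * 2 * ed y = (ea x * ky + kx * ed y) * 2 by ring.
by rewrite !mulzK.
Qed.

Lemma SL2_conj_t x : SL2 x -> b_even x -> SL2 (conj_t x).
Proof.
move=> /SL2P det /dvdzP[k hk]; apply/SL2P; case: (entries_conj_t x) => -> -> -> ->.
by rewrite hk mulzK // -[RHS]det hk; ring.
Qed.

Lemma conj_tV x : SL2 x -> b_even x -> conj_t x^-1 = (conj_t x)^-1.
Proof.
move=> Sx ex; apply: (mulrI (SL2_unit (SL2_conj_t Sx ex))).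
by rewrite -conj_tM ?b_evenV // !mulrV ?SL2_unit ?SL2_conj_t // conj_t1.
Qed.

Section ConjugationByT.
Variables K H : pred Mat.
Hypotheses (sgK : SLgroup K) (K_even : forall x, K x -> b_even x)
  (conj_tK : forall x, K x -> H (conj_t x)).

Lemma comm_sub_conj_t z : comm_sub K z -> comm_sub H (conj_t z).
Proof.
elim=> [|x y w Kx Ky Cw IH]; first by rewrite conj_t1; apply: comm_sub1.
have [KM KV] := (SLgroupM sgK, SLgroupV sgK); have Kw := comm_sub_mem sgK Cw.
rewrite !conj_tM ?K_even ?KM ?KV // !conj_tV ?(SLgroup_SL2 sgK) ?K_even //.
by apply: comm_subM; rewrite ?conj_tK.
Qed.

Lemma ab_eq_conj_t x y : K y -> ab_eq K x y -> ab_eq H (conj_t x) (conj_t y).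
Proof.
move=> Ky Exy; have Kx := ab_eq_mem sgK Ky Exy.
have [KV KS] := (SLgroupV sgK, SLgroup_SL2 sgK).
rewrite /ab_eq -conj_tV ?KS ?K_even // -conj_tM ?K_even ?KV //.
exact: comm_sub_conj_t.
Qed.

End ConjugationByT.

Lemma Gamma1_ed M d x : (d %| M)%N -> Gamma1 M x -> (ed x = 1 %[mod d%:Z])%Z.
Proof.
move=> dM /and4P[_ _ _ dx]; apply/eqP; rewrite eqz_mod_dvd.
by apply: dvdz_trans dx; rewrite dvdzE.
Qed.

Section Gamma0Diagonal.
Variable M : nat.

Lemma Gamma0_ed_mul x y : Gamma0 M x -> (ed (x * y) = ed x * ed y %[mod M%:Z])%Z.
Proof.
case/andP=> _ /dvdzP[q cq]; case: (entries_mul x y) => _ _ _ ->.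
by rewrite cq mulrAC modzMDl.
Qed.

Lemma Gamma0_ea_ed x : Gamma0 M x -> (ea x * ed x = 1 %[mod M%:Z])%Z.
Proof.
case/andP=> /SL2P det /dvdzP[q cq].
have -> : ea x * ed x = eb x * q * M%:Z + 1 by rewrite -det cq; ring.
by rewrite modzMDl.
Qed.

Let sg0 := Gamma0_SLgroup M.

Lemma Gamma0_ed_conj u y : Gamma0 M u -> Gamma0 M y ->
  (ed (u * y * u^-1) = ed y %[mod M%:Z])%Z.
Proof.
move=> Mu My; rewrite Gamma0_ed_mul ?(SLgroupM sg0) // -modzMml Gamma0_ed_mul //.
rewrite modzMml; case: (entries_inv (SLgroup_SL2 sg0 Mu)) => _ _ _ ->.
by rewrite mulrAC [ed u * _]mulrC -modzMml Gamma0_ea_ed // modzMml mul1r.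
Qed.

Lemma Gamma0_ed_comm_sub z : comm_sub (Gamma0 M) z -> (ed z = 1 %[mod M%:Z])%Z.
Proof.
elim=> [|x y w Mx My Cw IH]; first by case: entries_1 => _ _ _ ->.
have [MM MV] := (SLgroupM sg0, SLgroupV sg0).
rewrite Gamma0_ed_mul ?MM ?MV // -modzMmr IH modzMmr mulr1.
have -> : x^-1 * y^-1 * x * y = x^-1 * (y^-1 * x * y^-1^-1) by rewrite invrK !mulrA.
rewrite Gamma0_ed_mul ?MV // -modzMmr Gamma0_ed_conj ?MV // modzMmr.
by case: (entries_inv (SLgroup_SL2 sg0 Mx)) => _ _ _ ->; rewrite Gamma0_ea_ed.
Qed.

Lemma Gamma0_ab_eq_ed x y : Gamma0 M y -> ab_eq (Gamma0 M) x y ->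
  (ed x = ed y %[mod M%:Z])%Z.
Proof.
move=> My Exy; rewrite -(mulrVK (SLgroup_unit sg0 My) x) Gamma0_ed_mul.
  by rewrite -modzMml Gamma0_ed_comm_sub // modzMml mul1r.
exact: (comm_sub_mem sg0 Exy).
Qed.

Lemma Gamma0_ed_transfer_index2 g : Gamma0 M g ->
  (ed (transfer_index2 g) = ed g ^+ 2 %[mod M%:Z])%Z.
Proof.
move=> Mg; rewrite /transfer_index2 expr2; case: ifP => _; last exact: Gamma0_ed_mul.
by rewrite Gamma0_ed_mul // -modzMmr Gamma0_ed_conj ?Gamma0_Tm // modzMmr.
Qed.

End Gamma0Diagonal.

Lemma one_add_unit_mod_exp (x : int) n :
  exists a e : int, a * (1 + x) = 1 + e * x ^+ n.
Proof.
elim: n => [|n [a [e h]]]; first by exists 0, (-1); rewrite expr0; ring.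
by exists (a - e * x ^+ n), (- e); rewrite exprS mulrBl h; ring.
Qed.

Section Phi.
Variables N r s : nat.
Hypotheses (oddN : odd N) (Npos : (0 < N)%N) (hs : (2 <= s)%N) (hsr : (s <= r)%N).
Local Notation P := (Phi N r s).
Local Notation G1 := (Gamma1 (N * 2 ^ r)).
Local Notation K := (sub0up2 P).

Lemma Phi_SLgroup : SLgroup P.
Proof. exact: SLgroupI (Gamma1_SLgroup _) (Gamma0_SLgroup _). Qed.

Lemma Phi_Gamma0 x : P x -> Gamma0 (2 ^ r) x.
Proof. by case/andP. Qed.

Lemma Phi_Tm : P Tm.
Proof. by rewrite /Phi Gamma1_Tm Gamma0_Tm. Qed.

Lemma two_dvd_level : (2 %| (N * 2 ^ s)%N%:Z)%Z.
Proof. by rewrite dvdzE /= dvdn_mull // dvdn_exp // (leq_trans _ hs). Qed.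

Lemma Phi_odd_diag x : P x -> (2 %| ea x - 1)%Z /\ (2 %| ed x - 1)%Z.
Proof.
by case/andP=> /and4P[_ _ ax dx] _; split; apply: dvdz_trans two_dvd_level _.
Qed.

Lemma Gamma1_Phi x : G1 x -> P x.
Proof.
have dvd_s_r : ((N * 2 ^ s)%N%:Z %| (N * 2 ^ r)%N%:Z)%Z.
  by rewrite dvdzE /= dvdn_pmul2l // dvdn_exp2l.
have dvd_r : ((2 ^ r)%N%:Z %| (N * 2 ^ r)%N%:Z)%Z by rewrite dvdzE /= dvdn_mull.
case/and4P=> Sx cx ax dx; rewrite /Phi /Gamma1 /Gamma0 Sx /=.
by rewrite !(dvdz_trans dvd_s_r) // (dvdz_trans dvd_r).
Qed.

Lemma Phi_conj_t x : K x -> P (conj_t x).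
Proof.
case/andP=> /andP[/and4P[Sx cx ax dx] /andP[_ cx']] /andP[_ ex].
rewrite /Phi /Gamma1 /Gamma0 SL2_conj_t //=.
by case: (entries_conj_t x) => -> _ -> ->; rewrite ax dx !dvdz_mull.
Qed.

Lemma coprimez_N_2exp : coprimez N%:Z (2 ^ r)%N%:Z.
Proof. by rewrite coprimezE /= coprimeXr // coprimen2. Qed.

Lemma Phi_Gamma1 x : P x -> (ed x = 1 %[mod (2 ^ r)%N%:Z])%Z -> G1 x.
Proof.
move=> Px /eqP; rewrite eqz_mod_dvd => dx'.
have dvdN : (N%:Z %| (N * 2 ^ s)%N%:Z)%Z by rewrite dvdzE /= dvdn_mulr.
have ax' : ((2 ^ r)%N%:Z %| ea x - 1)%Z.
  move/eqP: (Gamma0_ea_ed (Phi_Gamma0 Px)); rewrite eqz_mod_dvd => adx.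
  have -> : ea x - 1 = (ea x * ed x - 1) - ea x * (ed x - 1) by ring.
  by rewrite rpredB ?dvdz_mull.
case/andP: Px => /and4P[Sx cx ax dx] /andP[_ cx'].
rewrite /Gamma1 Sx PoszM !Gauss_dvdz ?coprimez_N_2exp //.
by rewrite !(dvdz_trans dvdN) // cx' ax' dx'.
Qed.

Lemma Phi_ed_kernel x : P x ->
  (ed x = 1 %[mod (2 ^ r)%N%:Z])%Z <-> exists k, G1 k /\ ab_eq P x k.
Proof.
move=> Px; split=> [dx | [k [G1k Exk]]].
  by exists x; split; [apply: Phi_Gamma1 | apply: (ab_eq_refl Phi_SLgroup Px)].
rewrite (Gamma0_ab_eq_ed (Phi_Gamma0 (Gamma1_Phi G1k)) (ab_eq_subset Phi_Gamma0 Exk)).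
exact: Gamma1_ed (dvdn_mull _ (dvdnn _)) G1k.
Qed.

(* [1 + x] is a unit modulo [x ^+ r], which gives a matrix of [SL2] with lower
   row [(x ^+ r, 1 + x)]; [x] is [0] modulo [N * 2 ^ s] and [u - 1] modulo [2 ^ r]. *)
Lemma Phi_ed_surj u : (u = 1 %[mod (2 ^ s)%N%:Z])%Z ->
  exists g, P g /\ (ed g = u %[mod (2 ^ r)%N%:Z])%Z.
Proof.
move/eqP; rewrite eqz_mod_dvd => /dvdzP[q hq].
have [[al be] /= hab] := coprimezP _ _ coprimez_N_2exp.
pose x := al * N%:Z * (u - 1).
have hx : ((N * 2 ^ s)%N%:Z %| x)%Z.
  by apply/dvdzP; exists (al * q); rewrite /x hq PoszM; ring.
have [a [e hae]] := one_add_unit_mod_exp x r.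
have r_gt0 : (0 < r)%N by apply: leq_trans hsr; apply: leq_trans hs.
exists (mx2 a e (x ^+ r) (1 + x)); case: (mx2E a e (x ^+ r) (1 + x)) => ha hb hc hd.
split.
- have Sg : SL2 (mx2 a e (x ^+ r) (1 + x)).
    by apply/SL2P; rewrite ha hb hc hd hae; ring.
  have ha' : a - 1 = e * x ^+ r - a * x.
    have -> : a - 1 = a * (1 + x) - 1 - a * x by ring.
    by rewrite hae; ring.
  rewrite /Phi /Gamma1 /Gamma0 Sg ha hc hd [1 + x]addrC addrK ha' /=.
  have hxr := dvdz_exp r_gt0 hx.
  have h2r : ((2 ^ r)%N%:Z %| x ^+ r)%Z.
    have -> : (2 ^ r)%N%:Z = 2 ^+ r by rewrite -natz natrX.
    exact/dvdz_exp2r/(dvdz_trans two_dvd_level).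
  by rewrite hxr hx h2r (rpredB (dvdz_mull _ hxr) (dvdz_mull _ hx)).
- apply/eqP; rewrite eqz_mod_dvd hd.
  have -> : 1 + x - u = (u - 1) * (al * N%:Z - 1) by rewrite /x; ring.
  have -> : al * N%:Z - 1 = - (be * (2 ^ r)%N%:Z) by rewrite -hab; ring.
  by rewrite dvdz_mull // rpredN dvdz_mull.
Qed.

Let sgK := sub0up2_SLgroup Phi_SLgroup.

Lemma K_b_even x : K x -> b_even x.
Proof. by case/andP=> _ /andP[]. Qed.

Lemma K_Gamma0 x : K x -> Gamma0 (2 ^ r) x.
Proof. by case/andP=> /Phi_Gamma0. Qed.

Lemma AtkinU_Gamma1_Phi ts1 ts2 g : right_transv G1 (sub0up2 G1) ts1 ->
  right_transv P K ts2 -> G1 g -> ab_eq P (AtkinU G1 ts1 g) (AtkinU P ts2 g).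
Proof.
move=> tr1 tr2 G1g; have Pg := Gamma1_Phi G1g.
have G1_odd_diag x : G1 x -> (2 %| ea x - 1)%Z /\ (2 %| ed x - 1)%Z.
  by move/Gamma1_Phi/Phi_odd_diag.
have K_G1 x : sub0up2 G1 x -> K x by case/andP=> /Gamma1_Phi Px ex; apply/andP.
have E1 := transfer_ab_eq (Gamma1_SLgroup _) (Gamma1_Tm _) G1_odd_diag tr1 G1g.
have E2 := transfer_ab_eq Phi_SLgroup Phi_Tm Phi_odd_diag tr2 Pg.
have KI := transfer_index2_mem Phi_SLgroup Phi_Tm Phi_odd_diag Pg.
apply: (ab_eq_conj_t sgK K_b_even Phi_conj_t (ab_eq_mem sgK KI E2)).
exact: (ab_eq_trans sgK KI (ab_eq_subset K_G1 E1) (ab_eq_sym sgK KI E2)).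
Qed.

Lemma AtkinU_Phi_ed ts g : right_transv P K ts -> P g ->
  (ed (AtkinU P ts g) = ed g ^+ 2 %[mod (2 ^ r)%N%:Z])%Z.
Proof.
move=> tr Pg; have E := transfer_ab_eq Phi_SLgroup Phi_Tm Phi_odd_diag tr Pg.
have KI := transfer_index2_mem Phi_SLgroup Phi_Tm Phi_odd_diag Pg.
rewrite /AtkinU; case: (entries_conj_t (transfer K ts g)) => _ _ _ ->.
rewrite (Gamma0_ab_eq_ed (K_Gamma0 KI) (ab_eq_subset K_Gamma0 E)).
exact/Gamma0_ed_transfer_index2/Phi_Gamma0.
Qed.

End Phi.

Theorem lemma3p4 (N r s : nat) (oddN : odd N) (Npos : (0 < N)%N)
    (hs : (2 <= s)%N) (hsr : (s <= r)%N) :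
  let G1 := Gamma1 (N * 2 ^ r) in
  let P := Phi N r s in
  (* (i) inclusion Gamma_1(N 2^r)^ab -> (Phi_r^s)^ab commutes with U *)
  (forall ts1 ts2 : seq Mat,
     right_transv G1 (sub0up2 G1) ts1 ->
     right_transv P (sub0up2 P) ts2 ->
     forall g, G1 g -> ab_eq P (AtkinU G1 ts1 g) (AtkinU P ts2 g)) /\
  (* (ii) g |-> d mod Gamma_r lands in Gamma_s/Gamma_r and is multiplicative *)
  (forall g, P g -> (ed g = 1 %[mod (2 ^ s)%N%:Z])%Z) /\
  (forall g h, P g -> P h ->
     (ed (g * h) = ed g * ed h %[mod (2 ^ r)%N%:Z])%Z) /\
  (* (iii) its kernel on (Phi_r^s)^ab is exactly the image of Gamma_1(N2^r)^ab *)
  (forall g, P g ->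
     (ed g = 1 %[mod (2 ^ r)%N%:Z])%Z <-> exists k, G1 k /\ ab_eq P g k) /\
  (* (iv) it is surjective onto Gamma_s/Gamma_r *)
  (forall u : int, (u = 1 %[mod (2 ^ s)%N%:Z])%Z ->
     exists g, P g /\ (ed g = u %[mod (2 ^ r)%N%:Z])%Z) /\
  (* (v) the endomorphism induced by U on Gamma_s/Gamma_r is x |-> x^2 *)
  (forall ts : seq Mat, right_transv P (sub0up2 P) ts ->
     forall g, P g -> (ed (AtkinU P ts g) = ed g ^+ 2 %[mod (2 ^ r)%N%:Z])%Z).
Proof.
move=> G1 P; split; [|split; [|split; [|split; [|split]]]].
- by move=> ts1 ts2 tr1 tr2 g; apply: AtkinU_Gamma1_Phi.
- by move=> g /andP[G1g _]; apply: Gamma1_ed (dvdn_mull _ (dvdnn _)) G1g.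
- by move=> g h /Phi_Gamma0 Pg _; apply: Gamma0_ed_mul.
- by move=> g; apply: Phi_ed_kernel.
- by move=> u; apply: Phi_ed_surj.
- by move=> ts tr g; apply: AtkinU_Phi_ed.
Qed.
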